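(* Let $p$ be a prime, and let $K=\{k_1<k_2<\cdots<k_r\}$ and $L=\{l_1,\ldots,l_s\}$ be disjoint subsets of $\{0,1,\ldots,p-1\}$. Let $\mathcal{A}=\{A_1,\ldots,A_m\}$ be a family of distinct subsets of $[n]$ with $|A_i|\pmod p\in K$ for all $i$ and $|A_i\cap A_j|\pmod p\in L$ for all $i\neq j$. Suppose $n\ge s+k_r$, and suppose that either $n<p+k_1$ or $(s-2r+1)+k_r<p+k_1-1$. Consider, as functions $\{0,1\}^n\to\mathbb{F}_p$, the polynomials \begin{itemize} \item $f_{A_j}(x)=\prod_{i=1}^{s}(v_{A_j}\cdot x-l_i)$ for $1\le j\le m$; \item $q_S(x)=(1-x_n)\prod_{i\in S}x_i$ for every $S\subseteq[n-1]$ with $|S|\le s-1$; \item $g_I(x)=g(x)\prod_{i\in I}x_i$ for every $I\subseteq[n-1]$ with $|I|\le s-2r$, where $g(x)=\prod_{h\in K\cup(K-1)}\big(x_1+\cdots+x_{n-1}-h\big)$ and $K-1=\{k-1:k\in K\}$. \end{itemize} Then these polynomials are linearly independent over $\mathbb{F}_p$. Consequently \[ |\mathcal{A}|\le \binom{n-1}{s}+\binom{n-1}{s-1}+\cdots+\binom{n-1}{s-2r+1}. \]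
   Context: $x=(x_1,\ldots,x_n)$ with each $x_i\in\{0,1\}$; for $A\subseteq[n]$, $v_A\in\{0,1\}^n$ is the incidence vector of $A$ ($i$-th coordinate $1$ iff $i\in A$), and $v_A\cdot x=\sum_{i\in A}x_i$. If $s-2r<0$ the third family is empty. Binomial coefficients with negative lower index are $0$. *)

From HB Require Import structures.
From mathcomp Require Import all_boot all_order all_algebra.
Unset Printing Implicit Defensive.
Import Order.TTheory GRing.Theory Num.Theory.
Local Open Scope ring_scope.

(* Points of {0,1}^n are x : 'I_n -> bool; coordinate i (0-based i : 'I_n,
   i.e. x_{i+1} in the paper's 1-based notation) viewed in F_p is (x i)%:R. *)

Definition v_dot (p n : nat) (A : {set 'I_n}) (x : 'I_n -> bool) : 'F_p :=
  \sum_(i in A) (x i)%:R.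

Definition f_fun (p n : nat) (L : seq nat) (A : {set 'I_n}) (x : 'I_n -> bool) : 'F_p :=
  \prod_(l <- L) (v_dot p n A x - l%:R).

(* the last coordinate x_n (paper, 1-based); the sum has exactly one term when n > 0 *)
Definition x_last (p n : nat) (x : 'I_n -> bool) : 'F_p :=
  \sum_(i < n | (i.+1 == n)%N) (x i)%:R.

Definition x_mon (p n : nat) (S : {set 'I_n}) (x : 'I_n -> bool) : 'F_p :=
  \prod_(i in S) (x i)%:R.

Definition sub_init (n : nat) (S : {set 'I_n}) : bool :=
  [forall i in S, (i.+1 < n)%N].

Definition q_fun (p n : nat) (S : {set 'I_n}) (x : 'I_n -> bool) : 'F_p :=
  (1 - x_last p n x) * x_mon p n S x.

Definition KuKm1 (K : seq nat) : seq int :=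
  undup ([seq (k%:Z) | k <- K] ++ [seq (k%:Z - 1)%R | k <- K]).

Definition g_fun (p n : nat) (K : seq nat) (x : 'I_n -> bool) : 'F_p :=
  \prod_(h <- KuKm1 K) ((\sum_(i < n | (i.+1 < n)%N) (x i)%:R) - h%:~R).

Definition gI_fun (p n : nat) (K : seq nat) (I : {set 'I_n}) (x : 'I_n -> bool) : 'F_p :=
  g_fun p n K x * x_mon p n I x.

From HB Require Import structures.
From mathcomp Require Import all_boot all_order all_algebra.
From mathcomp Require Import zify.
Import Order.TTheory GRing.Theory Num.Theory.
Local Open Scope ring_scope.

(* Evaluate a vanishing combination at indicator vectors v_B.  At B = A_i + {n}
   every q_S vanishes (x_n = 1), every g_I vanishes (|A_i :&: [n-1]| is k or
   k - 1 mod p for some k in K), and so does f_{A_j} for j <> i whenever A_j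
   meets B as it meets A_i; hence all a_j = 0.  At B = J + {n} with J in [n-1]
   only the g_I survive, giving gamma(|J|) * sum_{I <= J} c_I = 0 with
   gamma(w) = prod_h (w - h); padding J with k_r + 1 further points moves |J|
   to where gamma has no root mod p, and Moebius inversion, by downward
   induction on |I|, kills the c_I.  At B = J in [n-1] only the q_S survive and
   Moebius inversion kills the b_S.  All these functions are polynomials of
   degree at most s on the cube, a space of dimension sum_{t <= s} C(n, t);
   subtracting the numbers of q's and g's bounds m. *)

Section PrimeField.
Variable p : nat.
Hypothesis p_pr : prime p.

Lemma Fp_natr_eq (a b : nat) : (a%:R == b%:R :> 'F_p) = (a == b %[mod p])%N.
Proof.
wlog ab : a b / (a <= b)%N.
  by move=> W; case/orP: (leq_total a b) => /W //; rewrite eq_sym => ->.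
rewrite [RHS]eq_sym eqn_mod_dvd // (dvdn_pcharf (pchar_Fp p_pr)).
by rewrite natrB // subr_eq0 eq_sym.
Qed.

Lemma Fp_intr_neq0 (z : int) : 0 < z -> z < p%:Z -> z%:~R != 0 :> 'F_p.
Proof.
move=> z_gt0 z_ltp; rewrite -(dvdz_pcharf (pchar_Fp p_pr)) dvdzE /=.
rewrite gtnNdvd //; lia.
Qed.

End PrimeField.

Section Dimension.
Variables (F : fieldType) (vT : vectType F).

Lemma indep_card_leq_dim (I : finType) (P : pred I) (v : I -> vT) (U : {vspace vT}) :
  (forall i, P i -> v i \in U) ->
  (forall a : I -> F, \sum_(i | P i) a i *: v i = 0 -> forall i, P i -> a i = 0) ->
  (#|P| <= \dim U)%N.
Proof.
move=> vU indep; pose X := [tuple v (enum_val i) | i < #|P|].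
have X_free : free X.
  apply/freeP => k k0 i; pose a x := k (enum_rank_in (enum_valP i) x).
  have := indep a _ _ (enum_valP i); rewrite /a enum_valK_in; apply.
  rewrite -[RHS]k0 (big_enum_val (A := P)); apply: eq_bigr => j _.
  by rewrite /a enum_valK_in -tnth_nth tnth_mktuple.
rewrite -[#|P|](size_tuple X) -(eqP X_free); apply: dimvS.
by apply/span_subvP => _ /mapP[i _ ->]; apply/vU/enum_valP.
Qed.

End Dimension.

Section BooleanPoints.
Variables (R : comPzSemiRingType) (T : finType) (x : T -> bool).

Lemma prod_natr_subset (S : {set T}) :
  \prod_(i in S) (x i)%:R = (S \subset [set i | x i])%:R :> R.
Proof.
have [S_x | /subsetPn[i iS]] := boolP (S \subset _).
  by apply: big1 => i /(subsetP S_x); rewrite inE => ->.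
by rewrite inE => /negbTE xi0; rewrite (bigD1 i) //= xi0 mul0r.
Qed.

Lemma sum_natr_card (P : pred T) :
  \sum_(i | P i) (x i)%:R = #|[set i | P i && x i]|%:R :> R.
Proof.
rewrite -natr_sum -sum1_card big_mkcond [in RHS]big_mkcond /=; congr (_%:R).
by apply: eq_bigr => i _; rewrite inE; case: (P i); case: (x i).
Qed.

End BooleanPoints.

Section MonomialSpan.
Variables (F : fieldType) (n : nat).
Local Notation cube := {ffun 'I_n -> bool}.
Local Notation fun_space := {ffun cube -> F^o}.

Definition monomial (S : {set 'I_n}) : fun_space := [ffun x : cube => \prod_(i in S) (x i)%:R].

Definition monomial_span (d : nat) : {vspace fun_space} :=
  <<[seq monomial Y | Y <- enum [pred Y : {set 'I_n} | (#|Y| <= d)%N]]>>%VS.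

Lemma monomialE (S : {set 'I_n}) (x : cube) :
  monomial S x = (S \subset [set i | x i])%:R.
Proof. by rewrite ffunE prod_natr_subset. Qed.

Lemma monomialZM (c c' : F) (S T : {set 'I_n}) :
  (c *: monomial S) * (c' *: monomial T) = (c * c') *: monomial (S :|: T).
Proof.
apply/ffunP => x; rewrite ffunE !(ffunE (fun _ => _ *: _)) !monomialE subUset.
case: (S \subset _); case: (T \subset _); rewrite /= ?(scaler0, mulr0, mul0r) //.
by rewrite /GRing.scale /= !mulr1.
Qed.

Lemma mem_monomial_span (S : {set 'I_n}) d : (#|S| <= d)%N -> monomial S \in monomial_span d.
Proof. by move=> Sd; apply/memv_span/map_f; rewrite mem_enum. Qed.

Lemma monomial_span_mono d e : (d <= e)%N -> (monomial_span d <= monomial_span e)%VS.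
Proof.
move=> de; apply/span_subvP => u /mapP[S]; rewrite mem_enum => Sd ->.
by apply: mem_monomial_span; apply: leq_trans de.
Qed.

Lemma dim_monomial_span d :
  (\dim (monomial_span d) <= #|[pred Y : {set 'I_n} | (#|Y| <= d)%N]|)%N.
Proof. by rewrite (leq_trans (dim_span _)) // size_map -cardE. Qed.

Lemma monomial_spanP d u : u \in monomial_span d ->
  exists k (c : 'I_k -> F) (Y : 'I_k -> {set 'I_n}),
    (forall i, #|Y i| <= d)%N /\ u = \sum_i c i *: monomial (Y i).
Proof.
rewrite /monomial_span; set X := [seq _ | _ <- _] => u_in.
exists (size X), (fun i => coord (in_tuple X) i u).
have Y_ex (i : 'I_(size X)) : exists Y : {set 'I_n}, (#|Y| <= d)%N && (X`_i == monomial Y).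
  have /mapP[Y] := mem_nth 0 (ltn_ord i).
  by rewrite mem_enum => Yd ->; exists Y; rewrite eqxx andbT.
exists (fun i => xchoose (Y_ex i)); split=> [i|]; first by case/andP: (xchooseP (Y_ex i)).
rewrite {1}(@coord_span _ _ _ (in_tuple X) u u_in); apply: eq_bigr => i _.
by case/andP: (xchooseP (Y_ex i)) => _ /eqP <-.
Qed.

Lemma monomial_spanM d e u w : u \in monomial_span d -> w \in monomial_span e ->
  u * w \in monomial_span (d + e).
Proof.
move=> /monomial_spanP[k [c [Y [Yd ->]]]] /monomial_spanP[k' [c' [Y' [Y'e ->]]]].
rewrite mulr_suml; apply: memv_suml => i _; rewrite mulr_sumr.
apply: memv_suml => j _; rewrite monomialZM; apply/memvZ/mem_monomial_span.
by rewrite (leq_trans (leq_card_setU _ _)) // leq_add.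
Qed.

Lemma affine_mem_monomial_span (P : pred 'I_n) (c d : F) :
  [ffun x : cube => c * \sum_(i | P i) (x i)%:R + d] \in monomial_span 1.
Proof.
have -> : [ffun x : cube => c * \sum_(i | P i) (x i)%:R + d] =
    \sum_(i | P i) c *: monomial [set i] + d *: monomial set0.
  apply/ffunP => x; rewrite !ffunE sum_ffunE big_set0 mulr_sumr.
  congr (_ + _); last by rewrite /GRing.scale /= mulr1.
  by apply: eq_bigr => i _; rewrite !ffunE big_set1.
apply: memvD; last by apply/memvZ/mem_monomial_span; rewrite cards0.
by apply: memv_suml => i _; apply/memvZ/mem_monomial_span; rewrite cards1.
Qed.

Lemma prod_mem_monomial_span (T : Type) (r : seq T) (G : T -> cube -> F) :
  (forall t, [ffun x => G t x] \in monomial_span 1) ->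
  [ffun x => \prod_(t <- r) G t x] \in monomial_span (size r).
Proof.
move=> G1; elim: r => [|t r IHr].
  have -> : [ffun x => \prod_(t <- [::]) G t x] = monomial set0.
    by apply/ffunP => x; rewrite !ffunE big_nil big_set0.
  by rewrite mem_monomial_span ?cards0.
have -> : [ffun x => \prod_(t' <- t :: r) G t' x] =
    [ffun x => G t x] * [ffun x => \prod_(t <- r) G t x].
  by apply/ffunP => x; rewrite !ffunE big_cons.
by have := monomial_spanM _ _ _ _ (G1 t) IHr; rewrite add1n.
Qed.

End MonomialSpan.

Lemma card_small_subsets (T : finType) (X : {set T}) k :
  #|[pred Y : {set T} | (Y \subset X) && (#|Y| < k)%N]| = (\sum_(t < k) 'C(#|X|, t))%N.
Proof.
elim: k => [|k IHk].
  by rewrite big_ord0; apply: eq_card0 => Y; rewrite inE ltn0 andbF.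
rewrite big_ord_recr /= -IHk -(cards_draws X k) -!sum1_card.
rewrite (bigID (fun Y : {set T} => #|Y| == k)) /= addnC; congr addn.
  apply: eq_bigl => Y; rewrite !inE; case: (Y \subset X) => //=.
  by rewrite ltnS; case: ltngtP.
apply: eq_bigl => Y; rewrite !inE; case: (Y \subset X) => //=.
by rewrite ltnS; case: ltngtP.
Qed.

Lemma sum_binS_lt m s :
  (\sum_(t < s.+1) 'C(m.+1, t) = \sum_(t < s.+1) 'C(m, t) + \sum_(t < s) 'C(m, t))%N.
Proof.
elim: s => [|s IHs]; first by rewrite !big_ord_recr !big_ord0 /= !bin0.
rewrite big_ord_recr /= IHs binS [in RHS]big_ord_recr /= [in RHS](big_ord_recr s) /=.
rewrite !(big_ord_recr s) /=; lia.
Qed.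

Lemma exists_subset_card (T : finType) (Y : {set T}) t :
  (t <= #|Y|)%N -> exists2 Z : {set T}, Z \subset Y & #|Z| = t.
Proof.
elim: t => [|t IHt] tY; first by exists set0; rewrite ?sub0set ?cards0.
have [Z ZY cardZ] := IHt (ltnW tY).
have : (0 < #|Y :\: Z|)%N by rewrite cardsD (setIidPr ZY) cardZ subn_gt0.
case/card_gt0P => y; rewrite in_setD => /andP[yNZ yY].
by exists (y |: Z); rewrite ?subUset ?sub1set ?yY // cardsU1 yNZ cardZ.
Qed.

Lemma sorted_head_last (s : seq nat) k :
  sorted ltn s -> k \in s -> (head 0 s <= k <= last 0 s)%N.
Proof.
move=> /(sub_sorted ltnW) s_sorted k_s; rewrite -(nth_index 0 k_s) -nth0 -nth_last.
rewrite -index_mem in k_s.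
have s_gt0 : (0 < size s)%N by apply: leq_ltn_trans k_s.
by rewrite !(sorted_leq_nth leq_trans leqnn) ?inE ?ltn_predL // -ltnS prednK.
Qed.

Lemma subset_sums_eq0 (R : zmodType) (T : finType) (U : {set T}) (phi : {set T} -> R) :
  (forall J : {set T}, J \subset U -> \sum_(I : {set T} | I \subset J) phi I = 0) ->
  forall J : {set T}, J \subset U -> phi J = 0.
Proof.
move=> sum0 J; have [k] := ubnP #|J|; elim: k J => // k IHk J J_k JU.
have := sum0 J JU; rewrite (bigD1 J) //= big1 ?addr0 // => I /andP[IJ I_J].
apply: IHk _ (subset_trans IJ JU); rewrite -ltnS (leq_trans _ J_k) // ltnS.
by rewrite proper_card // properEneq I_J.
Qed.

Lemma subset_sums_shift_eq0 (R : zmodType) (T : finType) (U Z : {set T})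
    (psi : {set T} -> R) :
  [disjoint U & Z] ->
  (forall J : {set T}, J \subset U -> \sum_(I : {set T} | I \subset J :|: Z) psi I = 0) ->
  (forall I : {set T}, U \proper I -> psi I = 0) ->
  psi U = 0.
Proof.
move=> UZ sum0 psi0; pose phi (J : {set T}) := \sum_(I : {set T} | I :\: Z == J) psi I.
have phi_sum0 (J : {set T}) : J \subset U -> \sum_(J' : {set T} | J' \subset J) phi J' = 0.
  move=> JU; rewrite -[RHS](sum0 J JU) /phi.
  rewrite [RHS](partition_big (fun I : {set T} => I :\: Z) (fun J' => J' \subset J)) /=.
    apply: eq_bigr => J' J'J; apply: eq_bigl => I.
    by case: eqP => [IZ|]; rewrite ?andbF ?andbT // setUC -subDset IZ.
  by move=> I; rewrite setUC -subDset.
have := @subset_sums_eq0 _ _ U phi phi_sum0 U (subxx U); rewrite /phi (bigD1 U) /=.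
  rewrite big1 ?addr0 // => I /andP[/eqP IZ IU]; apply: psi0.
  by rewrite properEneq eq_sym IU -IZ subsetDl.
by rewrite setDE; apply/eqP/setIidPl; rewrite subsetC -disjoints_subset disjoint_sym.
Qed.

Definition init_ords (n : nat) := [set i : 'I_n | (i.+1 < n)%N].

Lemma sub_initE n (S : {set 'I_n}) : sub_init n S = (S \subset init_ords n).
Proof. by apply/forall_inP/subsetP => S_init i /S_init; rewrite inE. Qed.

Lemma mem_init_ords n (i : 'I_n.+1) : (i \in init_ords n.+1) = (i != ord_max).
Proof. by rewrite inE -val_eqE /=; have := ltn_ord i; lia. Qed.

Lemma card_ord_max_init n (X : {set 'I_n.+1}) :
  #|X| = ((ord_max \in X) + #|X :&: init_ords n.+1|)%N.
Proof.
rewrite (cardsD1 ord_max X); congr (_ + _)%N.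
by apply: eq_card => i; rewrite in_setD1 in_setI mem_init_ords andbC.
Qed.

Lemma card_init_ords n : #|init_ords n.+1| = n.
Proof.
by have := @card_ord_max_init n [set: 'I_n.+1]; rewrite cardsT card_ord setTI in_setT => -[].
Qed.

Lemma setU_ord_max_init n (X : {set 'I_n.+1}) :
  (X :|: [set ord_max]) :&: init_ords n.+1 = X :&: init_ords n.+1.
Proof.
apply/setP => i; rewrite !in_setI in_setU in_set1 mem_init_ords.
by case: (i == ord_max); rewrite ?andbF ?orbF.
Qed.

Lemma subsetU_ord_max n (I J : {set 'I_n.+1}) : I \subset init_ords n.+1 ->
  (I \subset J :|: [set ord_max]) = (I \subset J).
Proof.
move=> I_init; have subI (X : {set 'I_n.+1}) : (I \subset X) = (I \subset X :&: init_ords n.+1).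
  by rewrite subsetI I_init andbT.
by rewrite subI setU_ord_max_init -subI.
Qed.

Definition q_index n (L : seq nat) (S : {set 'I_n}) :=
  sub_init n S && (#|S|.+1 <= size L)%N.
Definition g_index n (K L : seq nat) (I : {set 'I_n}) :=
  sub_init n I && (#|I| + 2 * size K <= size L)%N.

Definition lincomb p n m (K L : seq nat) (A : 'I_m -> {set 'I_n})
    (a : 'I_m -> 'F_p) (b c : {set 'I_n} -> 'F_p) (x : 'I_n -> bool) :=
  \sum_(j < m) a j * f_fun p n L (A j) x
  + \sum_(S | q_index n L S) b S * q_fun p n S x
  + \sum_(I | g_index n K L I) c I * gI_fun p n K I x.

Section LinearIndependence.
Context {p n m : nat} {K L : seq nat} {A : 'I_m -> {set 'I_n.+1}}.
Hypothesis p_pr : prime p.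
Hypothesis K_sorted : sorted ltn K.
Hypothesis L_lt_p : all (fun l => l < p)%N L.
Hypothesis LK_disjoint : ~~ has (fun l => l \in K) L.
Hypothesis A_K : forall i, (#|A i| %% p)%N \in K.
Hypothesis A_L : forall i j, i != j -> (#|A i :&: A j| %% p)%N \in L.
Hypothesis n_ge : (size L + last 0%N K <= n.+1)%N.
Hypothesis p_large : (n.+1 < p + head 0%N K)%N \/
  ((size L)%:Z + 1 - 2 * (size K)%:Z + (last 0%N K)%:Z < (p + head 0%N K)%:Z - 1)%R.

Local Notation N := n.+1.
Local Notation D := (init_ords N).

Definition gamma (w : nat) : 'F_p := \prod_(h <- KuKm1 K) (w%:R - h%:~R).

Lemma prod_L_eq0 w : (w %% p)%N \in L -> \prod_(l <- L) (w%:R - l%:R : 'F_p) = 0.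
Proof.
move=> wL; apply/eqP; rewrite prodf_seq_eq0; apply/hasP; exists (w %% p)%N => //=.
by rewrite Fp_nat_mod // subrr.
Qed.

Lemma prod_L_neq0 w : (w %% p)%N \in K -> \prod_(l <- L) (w%:R - l%:R : 'F_p) != 0.
Proof.
move=> wK; rewrite prodf_seq_neq0; apply/allP => l lL /=.
rewrite subr_eq0 Fp_natr_eq // (modn_small (allP L_lt_p l lL)).
by apply: contraNneq (hasPn LK_disjoint l lL) => <-.
Qed.

Lemma gamma_eq0 w : ((w %% p)%N \in K) || ((w.+1 %% p)%N \in K) -> gamma w = 0.
Proof.
move=> wK; apply/eqP; rewrite prodf_seq_eq0; apply/hasP.
have intrE (k : nat) : (k%:Z)%:~R = k%:R :> 'F_p by [].
case/orP: wK => wK.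
  exists (w %% p)%N%:Z; first by rewrite mem_undup mem_cat map_f.
  by rewrite /= intrE Fp_nat_mod // subrr.
exists ((w.+1 %% p)%N%:Z - 1).
  by rewrite mem_undup mem_cat (map_f (fun k : nat => k%:Z - 1)) ?orbT.
by rewrite /= intrB intrE Fp_nat_mod // -addn1 natrD addrK subrr.
Qed.

Lemma gamma_card_eq0 (X : {set 'I_N}) : (#|X| %% p)%N \in K -> gamma #|X :&: D| = 0.
Proof.
by rewrite card_ord_max_init => XK; apply: gamma_eq0; case: (ord_max \in X) XK => ->; rewrite ?orbT.
Qed.

Lemma f_funE (X : {set 'I_N}) (x : 'I_N -> bool) :
  f_fun p N L X x = \prod_(l <- L) (#|X :&: [set i | x i]|%:R - l%:R).
Proof.
apply: eq_bigr => l _; rewrite /v_dot sum_natr_card; congr (_%:R - _).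
by apply: eq_card => i; rewrite !inE.
Qed.

Lemma q_funE (S : {set 'I_N}) (x : 'I_N -> bool) :
  q_fun p N S x = (1 - (x ord_max)%:R) * (S \subset [set i | x i])%:R.
Proof. by rewrite /q_fun /x_last /x_mon prod_natr_subset (big_pred1 ord_max). Qed.

Lemma gI_funE (I : {set 'I_N}) (x : 'I_N -> bool) :
  gI_fun p N K I x = gamma #|[set i | x i] :&: D| * (I \subset [set i | x i])%:R.
Proof.
rewrite /gI_fun /x_mon prod_natr_subset; congr (_ * _); apply: eq_bigr => h _.
rewrite sum_natr_card setIC; congr (_%:R - _); by apply: eq_card => i; rewrite !inE.
Qed.

Local Notation q_index := (q_index N L).
Local Notation g_index := (g_index N K L).

Definition lincomb_at (a : 'I_m -> 'F_p) (b c : {set 'I_N} -> 'F_p) (B : {set 'I_N}) :=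
  \sum_(j < m) a j * \prod_(l <- L) (#|A j :&: B|%:R - l%:R)
  + \sum_(S | q_index S) b S * ((1 - (ord_max \in B)%:R) * (S \subset B)%:R)
  + \sum_(I | g_index I) c I * (gamma #|B :&: D| * (I \subset B)%:R).

Lemma lincombE a b c x :
  lincomb p N m K L A a b c x = lincomb_at a b c [set i | x i].
Proof.
rewrite /lincomb /lincomb_at; congr (_ + _ + _); apply: eq_bigr => ? _; congr (_ * _);
  by rewrite (f_funE, q_funE, gI_funE) ?inE.
Qed.

(* Shifting sizes up by [pad] moves the window [0, s - 2r] strictly above K and,
   by [p_large], below k_1 - 1 + p: gamma has no root mod p there. *)
Definition pad := if K is [::] then 0%N else (last 0%N K).+1.

Lemma pad_add_leq t : (t + 2 * size K <= size L)%N -> (t <= n)%N -> (pad + t <= n)%N.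
Proof. by move: n_ge; rewrite /pad; case: K => [|k K'] /=; lia. Qed.

Lemma gamma_neq0 t w : (t + 2 * size K <= size L)%N ->
  (pad <= w <= pad + t)%N -> (w <= n)%N -> gamma w != 0.
Proof.
move=> tK w_pad w_n; rewrite prodf_seq_neq0; apply/allP => h hK /=.
have [k kK h_k] : exists2 k, k \in K & (h = k%:Z) \/ (h = k%:Z - 1).
  move: hK; rewrite mem_undup mem_cat => /orP[] /mapP[k kK ->]; exists k => //; by [left | right].
have k_bounds := sorted_head_last _ _ K_sorted kK.
rewrite -[w%:R]/((w%:Z)%:~R : 'F_p) -intrB; apply: Fp_intr_neq0 => //.
all: move: p_large w_pad tK k_bounds; rewrite /pad; case: K kK => // k0 K' _ /=.
all: by case: h_k => ->; lia.
Qed.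

Section Coefficients.
Context {a : 'I_m -> 'F_p} {b c : {set 'I_N} -> 'F_p}.
Hypothesis lincomb0 : forall B, lincomb_at a b c B = 0.

Lemma coef_f_eq0_at i :
  (forall j, j != i -> a j = 0 \/ A j :&: (A i :|: [set ord_max]) = A j :&: A i) ->
  a i = 0.
Proof.
move=> Ai_only; set B := A i :|: [set ord_max].
have := lincomb0 B; rewrite /lincomb_at.
have B_max : ord_max \in B by rewrite !inE eqxx orbT.
rewrite [X in _ + X + _]big1 => [|S _]; last by rewrite B_max subrr mul0r mulr0.
rewrite [X in _ + X]big1 => [|I _].
  2: by rewrite setU_ord_max_init gamma_card_eq0 ?mul0r ?mulr0.
rewrite !addr0 (bigD1 i) //= [X in _ + X]big1 => [|j ji]; last first.
  by case: (Ai_only j ji) => [->|->]; rewrite ?mul0r // prod_L_eq0 ?mulr0 // A_L.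
rewrite addr0 (setIidPl (subsetUl _ _)) => /eqP.
by rewrite mulf_eq0 (negbTE (prod_L_neq0 _ (A_K i))) orbF => /eqP.
Qed.

Lemma coef_f_eq0 j : a j = 0.
Proof.
(* Sets through the last point first: for those, A_i + {n} meets every A_j as A_i does. *)
have a_max i : ord_max \in A i -> a i = 0.
  move=> i_max; apply: coef_f_eq0_at => k _; right; apply/setP => y.
  by rewrite !inE; case: eqP => [->|]; rewrite ?i_max ?orbT ?orbF ?andbT.
have [/a_max //|j_max] := boolP (ord_max \in A j).
apply: coef_f_eq0_at => k _; have [/a_max|k_max] := boolP (ord_max \in A k); first by left.
right; apply/setP => y; rewrite !inE.
by case: eqP => [->|]; rewrite ?(negbTE k_max) ?andbF ?orbF.
Qed.

Lemma sum_coef_g_eq0 (J : {set 'I_N}) : J \subset D ->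
  gamma #|J| * \sum_(I | g_index I && (I \subset J)) c I = 0.
Proof.
move=> JD; have := lincomb0 (J :|: [set ord_max]); rewrite /lincomb_at.
rewrite [X in X + _ + _]big1 => [|j _]; last by rewrite coef_f_eq0 mul0r.
rewrite [X in _ + X + _]big1 => [|S _]; last by rewrite !inE eqxx orbT subrr mul0r mulr0.
rewrite !add0r setU_ord_max_init (setIidPl JD) => sum0.
rewrite -[RHS]sum0 mulr_sumr big_mkcondr; apply: eq_bigr => I /andP[I_init _].
by rewrite subsetU_ord_max -?sub_initE //; case: (I \subset J); rewrite ?mulr1 ?mulr0 // mulrC.
Qed.

Lemma coef_g_eq0 I : g_index I -> c I = 0.
Proof.
pose psi J := if g_index J then c J else 0.
suff psi0 J : psi J = 0 by move=> gI; have := psi0 I; rewrite /psi gI.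
have [k] := ubnP #|~: J|; elim: k J => // k IHk I0 cI0.
case gI0: (g_index I0); last by rewrite /psi gI0.
move: (gI0); rewrite /g_index sub_initE => /andP[I0D I0_small].
have I0_n : (#|I0| <= n)%N by have := subset_leq_card I0D; rewrite card_init_ords.
have [Z ZD cardZ] : exists2 Z : {set 'I_N}, Z \subset D :\: I0 & #|Z| = pad.
  apply: exists_subset_card; rewrite cardsD (setIidPr I0D) card_init_ords leq_subRL //.
  by rewrite addnC pad_add_leq.
have I0Z : [disjoint I0 & Z].
  by rewrite disjoint_sym disjoints_subset (subset_trans ZD) // setDE subsetIr.
apply: (@subset_sums_shift_eq0 _ _ I0 Z psi I0Z) => [J JI0 | I1 I0I1]; last first.
  by apply: IHk; rewrite -ltnS (leq_trans _ cI0) // ltnS proper_card // properC.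
have JZD : J :|: Z \subset D.
  by rewrite subUset (subset_trans JI0 I0D) (subset_trans ZD (subsetDl _ _)).
have JZ_n : (#|J :|: Z| <= n)%N by have := subset_leq_card JZD; rewrite card_init_ords.
have cardJZ : #|J :|: Z| = (pad + #|J|)%N.
  by rewrite cardsU (disjoint_setI0 (disjointWl JI0 I0Z)) cards0 subn0 cardZ addnC.
have gamma_JZ : gamma #|J :|: Z| != 0.
  by rewrite (gamma_neq0 _ _ I0_small) // cardJZ leq_addr leq_add2l subset_leq_card.
have := sum_coef_g_eq0 _ JZD => /eqP; rewrite mulf_eq0 (negbTE gamma_JZ) /= => /eqP sum0.
by rewrite -[RHS]sum0 /psi -big_mkcondr; apply: eq_bigl => I1; rewrite andbC.
Qed.

Lemma coef_q_eq0 S : q_index S -> b S = 0.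
Proof.
pose phi S := if q_index S then b S else 0.
have phi_sum0 (J : {set 'I_N}) : J \subset D -> \sum_(S : {set 'I_N} | S \subset J) phi S = 0.
  move=> JD; have := lincomb0 J; rewrite /lincomb_at.
  rewrite [X in X + _ + _]big1 => [|j _]; last by rewrite coef_f_eq0 mul0r.
  rewrite [X in _ + X]big1 => [|I gI]; last by rewrite coef_g_eq0 // mul0r.
  have /negbTE -> : ord_max \notin J.
    by apply: contraTN isT => /(subsetP JD); rewrite mem_init_ords eqxx.
  rewrite add0r addr0 => sum0; rewrite -[RHS]sum0 big_mkcond [RHS]big_mkcond.
  apply: eq_bigr => T _; rewrite /phi subr0 mul1r.
  by case: (q_index T); case: (T \subset J); rewrite ?mulr1 ?mulr0.
move=> qS; have := @subset_sums_eq0 _ _ D phi phi_sum0 S; rewrite /phi qS; apply.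
by move: qS; rewrite /q_index sub_initE => /andP[].
Qed.

End Coefficients.


Lemma lincomb_at0 a b c :
  (forall x, lincomb p N m K L A a b c x = 0) -> forall B, lincomb_at a b c B = 0.
Proof.
move=> rel0 B; rewrite -(rel0 (fun i => i \in B)) lincombE.
by congr lincomb_at; apply/setP => i; rewrite inE.
Qed.

Local Notation cube := {ffun 'I_N -> bool}.
Local Notation index := ('I_m + ({set 'I_N} + {set 'I_N}))%type.

Definition family (i : index) : {ffun cube -> ('F_p)^o} :=
  match i with
  | inl j => [ffun x : cube => f_fun p N L (A j) x]
  | inr (inl Q) => [ffun x : cube => q_fun p N Q x]
  | inr (inr G) => [ffun x : cube => gI_fun p N K G x]
  end.

Definition family_index (i : index) : bool :=
  match i with
  | inl _ => true
  | inr (inl Q) => q_index Q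
  | inr (inr G) => g_index G
  end.

Lemma family_free (k : index -> 'F_p) :
  \sum_(i | family_index i) k i *: family i = 0 -> forall i, family_index i -> k i = 0.
Proof.
move=> k0; pose a j := k (inl j); pose b Q := k (inr (inl Q)); pose c G := k (inr (inr G)).
have rel0 : forall B, lincomb_at a b c B = 0.
  apply: lincomb_at0 => x; rewrite lincombE.
  have -> : [set i | x i] = [set i | [ffun i => x i] i] by apply/setP => i; rewrite !inE ffunE.
  rewrite -lincombE; have := congr1 (fun u : {ffun cube -> ('F_p)^o} => u [ffun i => x i]) k0.
  rewrite /= sum_ffunE [RHS]ffunE => <-; rewrite !big_sumType /= /lincomb -addrA.
  by congr (_ + (_ + _)); apply: eq_bigr => ? _; rewrite !ffunE.
case=> [j|[Q|G]] //= idx; first exact: coef_f_eq0 rel0 j.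
  exact: coef_q_eq0 rel0 Q idx.
exact: coef_g_eq0 rel0 G idx.
Qed.

Lemma size_KuKm1 : (size (KuKm1 K) <= 2 * size K)%N.
Proof. by rewrite (leq_trans (size_undup _)) // size_cat !size_map addnn -mul2n. Qed.

Lemma family_mem_span i : family_index i -> family i \in monomial_span 'F_p N (size L).
Proof.
case: i => [j _|[Q|G] /andP[_ small]].
- have -> : family (inl j) =
      [ffun x : cube => \prod_(l <- L) (1 * \sum_(i | i \in A j) (x i)%:R + - l%:R)].
    by apply/ffunP => x; rewrite !ffunE; apply: eq_bigr => l _; rewrite mul1r.
  by apply: prod_mem_monomial_span => l; apply: affine_mem_monomial_span.
- have -> : family (inr (inl Q)) =
      [ffun x : cube => -1 * \sum_(i : 'I_N | i.+1 == N) (x i)%:R + 1] * monomial 'F_p N Q.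
    by apply/ffunP => x; rewrite !ffunE mulN1r addrC.
  apply: (subvP (monomial_span_mono _ _ _ _ (_ : 1 + #|Q| <= size L)%N)).
    by rewrite add1n.
  by apply: monomial_spanM; [apply: affine_mem_monomial_span | apply: mem_monomial_span].
- have -> : family (inr (inr G)) =
      [ffun x : cube =>
         \prod_(h <- KuKm1 K) (1 * \sum_(i : 'I_N | (i.+1 < N)%N) (x i)%:R + - h%:~R)]
      * monomial 'F_p N G.
    apply/ffunP => x; rewrite !ffunE; congr (_ * _).
    by apply: eq_bigr => h _; rewrite mul1r.
  apply: (subvP (monomial_span_mono _ _ _ _ (_ : size (KuKm1 K) + #|G| <= size L)%N)).
    by rewrite addnC (leq_trans _ small) // leq_add2l size_KuKm1.
  apply: monomial_spanM; last exact: mem_monomial_span.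
  by apply: prod_mem_monomial_span => h; apply: affine_mem_monomial_span.
Qed.

Lemma card_family_leq : (m <= \sum_((size L).+1 - 2 * size K <= t < (size L).+1) 'C(n, t))%N.
Proof.
have := @indep_card_leq_dim _ _ _ family_index family _ family_mem_span family_free.
move/leq_trans/(_ (dim_monomial_span _ _ _)).
have -> : #|family_index| = (m + (#|q_index| + #|g_index|))%N.
  rewrite -sum1_card !big_sumType /= !sum1_card card_ord.
  by congr (_ + (_ + _))%N; apply: eq_card => x; rewrite !inE.
have -> : #|q_index| = (\sum_(t < size L) 'C(n, t))%N.
  rewrite -[in RHS](card_init_ords n) -card_small_subsets; apply: eq_card => S.
  by rewrite !inE unfold_in /= sub_initE.
have -> : #|g_index| = (\sum_(t < (size L).+1 - 2 * size K) 'C(n, t))%N.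
  rewrite -[in RHS](card_init_ords n) -card_small_subsets; apply: eq_card => S.
  by rewrite !inE unfold_in /= sub_initE ltn_subRL addnC ltnS.
have -> : #|[pred Y : {set 'I_N} | (#|Y| <= size L)%N]| =
    (\sum_(t < (size L).+1) 'C(N, t))%N.
  transitivity #|[pred Y : {set 'I_N} | (Y \subset setT) && (#|Y| < (size L).+1)%N]|.
    by apply: eq_card => Y; rewrite !inE subsetT.
  by rewrite card_small_subsets cardsT card_ord.
rewrite sum_binS_lt -!(big_mkord xpredT (fun t => 'C(n, t))).
rewrite (@big_cat_nat _ _ _ ((size L).+1 - 2 * size K) 0 (size L).+1) ?leq_subr //=.
lia.
Qed.

Lemma lincomb_indep a b c : (forall x, lincomb p N m K L A a b c x = 0) ->
  [/\ forall j, a j = 0,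
      forall S, sub_init N S -> (#|S|.+1 <= size L)%N -> b S = 0 &
      forall I, sub_init N I -> (#|I| + 2 * size K <= size L)%N -> c I = 0].
Proof.
move=> /lincomb_at0 rel0; split=> [j | S S_init S_small | I I_init I_small].
- exact: coef_f_eq0 rel0 j.
- by apply: (coef_q_eq0 rel0); rewrite /q_index S_init.
- by apply: (coef_g_eq0 rel0); rewrite /g_index I_init.
Qed.

End LinearIndependence.

Section EmptyGroundSet.
Context {p m : nat} {K L : seq nat} {A : 'I_m -> {set 'I_0}}.
Hypothesis A_inj : injective A.
Hypothesis A_K : forall i, (#|A i| %% p)%N \in K.

Lemma card_empty_ground : (m <= (K != [::]))%N.
Proof.
have m_le1 : (m <= 1)%N.
  rewrite -(card_ord m) -(card_ord 1); apply: (@leq_card _ _ (fun=> ord0)) => i j _.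
  by apply: A_inj; apply/setP => -[].
have [-> //|m_gt0] := posnP m.
by case: K (A_K (Ordinal m_gt0)).
Qed.

Lemma lincomb_indep_empty_ground a b c : L = [::] ->
  (forall x, lincomb p 0 m K L A a b c x = 0) ->
  [/\ forall j, a j = 0,
      forall S, sub_init 0 S -> (#|S|.+1 <= size L)%N -> b S = 0 &
      forall I, sub_init 0 I -> (#|I| + 2 * size K <= size L)%N -> c I = 0].
Proof.
move=> L_nil /(_ (fun=> false)); rewrite /lincomb /q_index /g_index L_nil /=.
rewrite [X in _ + X + _]big1 ?addr0 => [|S]; last by rewrite andbF.
have := card_empty_ground; case: K => [|k K'] /= m_le.
  have no_j (j : 'I_m) : False by case: j; case: m m_le.
  rewrite big1 => [|j]; last by case: (no_j j).
  rewrite add0r (bigD1 set0) ?big1 /= => [|I /andP[_ /eqP []]|]; last first.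
  - by rewrite cards0 andbT; apply/forall_inP => -[].
  - by apply/setP => -[].
  rewrite addr0 /gI_fun /g_fun /KuKm1 big_nil mul1r /x_mon big_set0 mulr1 => c0.
  by split=> [j|//|I _]; [case: (no_j j) | rewrite leqn0 addn0 cards_eq0 => /eqP ->].
rewrite [X in _ + X]big1 ?addr0 => [|I]; last by case/andP => _; lia.
move=> sum0; split=> [j|//|I _]; last by lia.
move: sum0; rewrite (bigD1 j) //= big1 => [|i ij]; last first.
  by case/eqP: ij; apply: ord_inj; move: (ltn_ord i) (ltn_ord j); lia.
by rewrite /f_fun big_nil !mulr1 addr0.
Qed.

End EmptyGroundSet.

Theorem mainTheorem7 (p n m : nat) (K L : seq nat) (A : 'I_m -> {set 'I_n}) :
  prime p ->
  sorted ltn K -> all (fun k => k < p)%N K ->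
  uniq L -> all (fun l => l < p)%N L ->
  ~~ has (fun l => l \in K) L ->
  injective A ->
  (forall i, (#|A i| %% p)%N \in K) ->
  (forall i j, i != j -> (#|A i :&: A j| %% p)%N \in L) ->
  (size L + last 0%N K <= n)%N ->
  ((n < p + head 0%N K)%N \/ ((size L)%:Z + 1 - 2 * (size K)%:Z + (last 0%N K)%:Z
                               < (p + head 0%N K)%:Z - 1)%R) ->
  (forall (a : 'I_m -> 'F_p) (b c : {set 'I_n} -> 'F_p),
   (forall x : 'I_n -> bool,
      \sum_(j < m) a j * f_fun p n L (A j) x
    + \sum_(S : {set 'I_n} | sub_init n S && (#|S|.+1 <= size L)%N) b S * q_fun p n S x
    + \sum_(I : {set 'I_n} | sub_init n I && (#|I| + 2 * size K <= size L)%N)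
          c I * gI_fun p n K I x = 0) ->
   [/\ forall j, a j = 0,
       forall S, sub_init n S -> (#|S|.+1 <= size L)%N -> b S = 0 &
       forall I, sub_init n I -> (#|I| + 2 * size K <= size L)%N -> c I = 0])
  /\ (m <= \sum_((size L).+1 - 2 * size K <= t < (size L).+1) 'C(n.-1, t))%N.
Proof.
move=> p_pr K_sorted _ _ L_lt_p LK_disj A_inj A_K A_L n_ge p_large.
case: n A A_inj A_K A_L n_ge p_large => [|n] A A_inj A_K A_L n_ge p_large; last first.
  split=> [a b c|]; last exact: card_family_leq p_pr K_sorted L_lt_p LK_disj A_K A_L n_ge p_large.
  exact: lincomb_indep p_pr K_sorted L_lt_p LK_disj A_K A_L n_ge p_large a b c.
have L_nil : L = [::] by case: L n_ge {L_lt_p LK_disj A_L p_large}.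
split=> [a b c|]; first exact: lincomb_indep_empty_ground A_inj A_K a b c L_nil.
have := card_empty_ground A_inj A_K; rewrite L_nil.
have [/size0nil -> /=|K_gt0] := posnP (size K); first by rewrite leqn0 => /eqP ->.
rewrite -size_eq0 -lt0n K_gt0 /= (_ : 1 - 2 * size K = 0)%N ?big_nat1 //.
by apply/eqP; rewrite subn_eq0 muln_gt0.
Qed.
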